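(* Let $f$ be as in the following setting: $f(x)=\prod_{j=1}^N(a_jx+b_j)^{d_j}$ with $N\ge1$, $a_j,b_j,d_j$ positive integers, and let $M_n:=\max_{1\le j\le N}\sqrt{a_jn+b_j}$. Then, as $n\to\infty$, $$\sum_{p\le M_n} v_p\big(\operatorname{lcm}(f(1),\dots,f(n))\big)\log p=O(\sqrt n),$$ where the sum runs over primes $p\le M_n$.
   Context: $v_p(a)$ denotes the exponent of the prime $p$ in the positive integer $a$. *)

From Stdlib Require Import Reals.
From mathcomp Require Import all_boot.

Set Implicit Arguments.
Unset Strict Implicit.
Unset Printing Implicit Defensive.

(* f(x) = prod_{j=1}^N (a_j x + b_j)^{d_j}; indices j range over 0..N-1. *)
Definition fpoly (N : nat) (a b d : nat -> nat) (x : nat) : nat :=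
  (\prod_(0 <= j < N) (a j * x + b j) ^ (d j))%N.

Definition Lf (N : nat) (a b d : nat -> nat) (n : nat) : nat :=
  (\big[lcmn/1]_(1 <= x < n.+1) fpoly N a b d x)%N.

Definition Mn (N : nat) (a b : nat -> nat) (n : nat) : R :=
  foldr Rmax R0
    (map (fun j => sqrt (INR (a j * n + b j)%N)) (iota 0 N)).

(* sum_{p prime, p <= M_n} v_p(L_n) log p.  Every p <= M_n lies in
   0 .. Z.to_nat (up M_n) - 1, so the finite range below covers all of them. *)
Definition Ssum (N : nat) (a b d : nat -> nat) (n : nat) : R :=
  foldr Rplus R0
    (map (fun p =>
            if prime p then
              if Rle_dec (INR p) (Mn N a b n)
              then Rmult (INR (logn p (Lf N a b d n))) (ln (INR p))
              else R0
            else R0)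
         (iota 0 (Z.to_nat (up (Mn N a b n))))).

(* Put K_n = sum_j (a_j n + b_j), D = sum_j d_j and m = isqrt K_n.
   (1) Every f(x) with x <= n is at most K_n^D, hence so is every prime-power
       part p^(v_p(L_n)) of their lcm.
   (2) M_n <= sqrt K_n, so only primes p <= m occur, and the sum equals
       log of the integer prod_p p^(v_p(L_n)) restricted to those primes.
   (3) Counting lemma: if p^(e_p) <= (m+1)^k for all primes p <= m, then
       prod_(p <= m) p^(e_p) <= 8^(4km).  Primes p <= sqrt m contribute at most
       (m+1)^(k (sqrt m + 1)); primes p > sqrt m satisfy (m+1)^k <= p^(2k), so
       they contribute at most primorial(m)^(2k), and primorial(m) <= 8^m by
       Chebyshev's argument with the central binomial coefficient.
   Hence the sum is at most 8 D m log 8 <= 8 D log 8 sqrt(sum_j (a_j + b_j)) sqrt n. *)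

From Stdlib Require Import Reals Psatz.
From mathcomp Require Import all_boot zify.

Set Implicit Arguments.
Unset Strict Implicit.
Unset Printing Implicit Defensive.

Definition primorial (n : nat) : nat := \prod_(0 <= p < n.+1 | prime p) p.

Lemma prime_dvd_fact p n : prime p -> (p %| n`!) = (p <= n).
Proof.
move=> pp; apply/idP/idP => [|le_pn]; last by rewrite dvdn_fact ?prime_gt0.
rewrite fact_prod (Euclid_dvd_prod _ _ _ pp) big_has => /hasP[i].
rewrite mem_index_iota => /andP[i_gt0 lt_in] /(dvdn_leq i_gt0); lia.
Qed.

Lemma prod_primes_dvd (r : seq nat) X : uniq r ->
  (forall p, p \in r -> prime p -> p %| X) -> \prod_(p <- r | prime p) p %| X.
Proof.
elim: r => [|q r IHr] /=; first by rewrite big_nil dvd1n.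
case/andP=> q_r uniq_r dvdX; rewrite big_cons.
have dvd_rX : \prod_(p <- r | prime p) p %| X.
  by apply: IHr => // p pr; apply: dvdX; rewrite in_cons pr orbT.
case: ifP => pq //; rewrite Gauss_dvd ?dvd_rX ?dvdX ?mem_head //.
rewrite prime_coprime // (Euclid_dvd_prod _ _ _ pq) big_has_cond.
apply/hasP=> -[p pr /andP[pp]]; rewrite dvdn_prime2 // => /eqP eqqp.
by move: q_r; rewrite eqqp pr.
Qed.

(* A binomial coefficient is bounded by the full row sum 2^n. *)
Lemma bin_le_exp2 n k : 'C(n, k) <= 2 ^ n.
Proof.
have [le_kn|lt_nk] := leqP k n; last by rewrite bin_small.
rewrite -[2]/(1 + 1) expnDn (bigD1 (inord k)) //= inordK ?ltnS //.
by rewrite 2!exp1n 2!muln1; apply: leq_addr.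
Qed.

(* The primes in (m+1, 2m+1] divide C(2m+1, m+1): they divide (2m+1)!
   but not (m+1)! m!. *)
Lemma primes_dvd_central_bin m :
  \prod_(m.+2 <= p < m.*2.+2 | prime p) p %| 'C(m.*2.+1, m.+1).
Proof.
apply: prod_primes_dvd; first exact: iota_uniq.
move=> p; rewrite mem_index_iota => /andP[lo hi] pp.
have fact_eq : 'C(m.*2.+1, m.+1) * m`! = \prod_(m.+2 <= k < m.*2.+2) k.
  have le_m : m.+1 <= m.*2.+1 by lia.
  have := bin_fact le_m; rewrite (fact_split le_m) (_ : m.*2.+1 - m.+1 = m); last lia.
  by rewrite mulnCA => /eqP; rewrite eqn_pmul2l ?fact_gt0 // => /eqP.
have : p %| 'C(m.*2.+1, m.+1) * m`!.
  rewrite fact_eq (big_cat_nat _ (n := p)) ?(ltnW hi) //= (big_ltn hi).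
  exact: dvdn_mull (dvdn_mulr _ (dvdnn p)).
by rewrite Euclid_dvdM // prime_dvd_fact // leqNgt (ltnW lo) orbF.
Qed.

(* The inductive step of Chebyshev's argument for odd arguments. *)
Lemma primorial_odd m : primorial m.*2.+1 <= primorial m.+1 * 2 ^ m.*2.+1.
Proof.
rewrite /primorial (big_cat_nat _ (n := m.+2)) //=; last lia.
rewrite leq_pmul2l ?prodn_cond_gt0 //; last by move=> p /prime_gt0.
apply: leq_trans (bin_le_exp2 _ m.+1).
by apply: dvdn_leq (primes_dvd_central_bin m); rewrite bin_gt0; lia.
Qed.

(* The even number 2m+2 >= 4 is not prime, so it does not change the primorial. *)
Lemma primorial_even m : 0 < m -> primorial m.*2.+2 = primorial m.*2.+1.
Proof.
move=> m_gt0; rewrite /primorial big_mkcond big_nat_recr //= -big_mkcond /=.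
case: ifP => [/even_prime[|]|]; rewrite ?muln1 //; first lia.
by rewrite /= odd_double.
Qed.

Lemma primorial_le n : primorial n <= 8 ^ n.
Proof.
elim/ltn_ind: n => n IHn; have [|lt_2n] := leqP n 2.
  by case: n IHn => [|[|[|]]] // _ _; rewrite /primorial unlock.
have [m m_gt0 [def_n|def_n]] : exists2 m, 0 < m & n = m.*2.+1 \/ n = m.*2.+2.
  have := odd_double_half n.-1; rewrite -muln2 => def_n1.
  exists n.-1./2; first lia.
  by case: (odd n.-1) def_n1 => /= def_n1; [right|left]; rewrite -muln2; lia.
- have le_IH : primorial m.+1 <= 8 ^ m.+1 by apply: (IHn); lia.
  rewrite def_n; apply: leq_trans (primorial_odd m) (leq_trans (leq_mul le_IH (leqnn _)) _).
  by rewrite -[8]/(2 ^ 3) -!expnM -expnD leq_exp2l //; lia.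
- rewrite def_n primorial_even //; apply: leq_trans (IHn _ _) _; first lia.
  by rewrite leq_exp2l.
Qed.

Lemma leq_exp_base m n e : m <= n -> m ^ e <= n ^ e.
Proof. by case: e => // e; rewrite leq_exp2r. Qed.

Lemma sqrt_bounds m : Nat.sqrt m * Nat.sqrt m <= m < (Nat.sqrt m).+1 * (Nat.sqrt m).+1.
Proof. have := Nat.sqrt_spec m (Nat.le_0_l m); lia. Qed.

Lemma prod_primes_le_const lo hi (F : nat -> nat) X : 0 < X ->
  (forall p, lo <= p < hi -> prime p -> F p <= X) ->
  \prod_(lo <= p < hi | prime p) F p <= X ^ (hi - lo).
Proof.
move=> X_gt0 le_FX; rewrite big_mkcond -prod_nat_const_nat.
rewrite big_nat_cond [leqRHS]big_nat_cond; apply: leq_prod => p /andP[range _].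
by case: ifP => pp; [apply: le_FX|].
Qed.

Lemma prod_primes_tail_le lo n (F : nat -> nat) : (forall p, prime p -> 0 < F p) ->
  \prod_(lo <= p < n | prime p) F p <= \prod_(0 <= p < n | prime p) F p.
Proof.
move=> F_gt0; have [le_lo_n|lt_n_lo] := leqP lo n.
  by rewrite [leqRHS](big_cat_nat _ (n := lo)) //= leq_pmull ?prodn_cond_gt0.
by rewrite big_geq ?prodn_cond_gt0 // ltnW.
Qed.

(* The small primes' contribution: (m+1)^(isqrt m + 1) <= 8^(2m). *)
Lemma pow_sqrt_le m : m.+1 ^ (Nat.sqrt m).+1 <= 8 ^ (2 * m).
Proof.
set s := Nat.sqrt m; have /andP[sq_le sq_gt] := sqrt_bounds m.
have le_m_8s : m.+1 <= 8 ^ s.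
  have pow2_s : s.+1 <= 2 ^ s by apply: ltn_expl.
  apply: leq_trans sq_gt (leq_trans (leq_mul pow2_s pow2_s) _).
  by rewrite -expnMn leq_exp_base.
apply: leq_trans (leq_exp_base _ le_m_8s) _; rewrite -expnM leq_exp2l //.
have : s <= s * s by case: (s) => // s'; rewrite leq_pmulr.
nia.
Qed.

(* Counting lemma: prime powers p^(e p) <= (m+1)^k for p <= m multiply to at
   most 8^(4km); split the primes at isqrt m. *)
Lemma prod_prime_powers_le m k (e : nat -> nat) :
  (forall p, prime p -> p <= m -> p ^ e p <= m.+1 ^ k) ->
  \prod_(0 <= p < m.+1 | prime p) p ^ e p <= 8 ^ (4 * k * m).
Proof.
move=> le_pe; have /andP[sq_le sq_gt] := sqrt_bounds m; set s := Nat.sqrt m in sq_le sq_gt *.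
have le_sm : s.+1 <= m.+1 by nia.
rewrite (big_cat_nat _ (n := s.+1)) //= (_ : 4 * k * m = 2 * m * k + 2 * k * m); last lia.
rewrite expnD; apply: leq_mul.
  apply: leq_trans (prod_primes_le_const (X := m.+1 ^ k) _ _) _.
  - by rewrite expn_gt0.
  - by move=> p /andP[_ lt_ps] pp; apply: le_pe => //; lia.
  by rewrite subn0 -expnM mulnC expnM expnM leq_exp_base // pow_sqrt_le.
have large_p p : s < p <= m -> prime p -> p ^ e p <= p ^ (2 * k).
  move=> /andP[lt_sp le_pm] pp; apply: leq_trans (le_pe p pp le_pm) _.
  by rewrite expnM; apply: leq_exp_base; rewrite expnS expn1; nia.
apply: (@leq_trans (\prod_(s.+1 <= p < m.+1 | prime p) p ^ (2 * k))).
  rewrite big_nat_cond [leqRHS]big_nat_cond; apply: leq_prod => p.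
  by case/andP=> /andP[lo hi] pp; apply: large_p => //; lia.
apply: leq_trans (prod_primes_tail_le _ _ _) _ => [p pp|]; first by rewrite expn_gt0 prime_gt0.
rewrite -(big_morph (fun x => x ^ (2 * k)) (fun x y => expnMn x y _) (exp1n _)).
rewrite (mulnC _ m) [8 ^ _]expnM.
exact: leq_exp_base (primorial_le m).
Qed.

(* The p-part of an lcm of integers in (0, B] is at most B, since the
   valuation of an lcm is the maximum of the valuations. *)
Lemma pfactor_biglcm_le p (r : seq nat) (F : nat -> nat) B : 0 < B ->
  (forall x, x \in r -> 0 < F x <= B) ->
  p ^ logn p (\big[lcmn/1]_(x <- r) F x) <= B.
Proof.
move=> B_gt0 F_bnd.
suff [] : 0 < \big[lcmn/1]_(x <- r) F x /\ p ^ logn p (\big[lcmn/1]_(x <- r) F x) <= B by [].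
rewrite big_seq_cond; apply: (big_ind (fun u => 0 < u /\ p ^ logn p u <= B)).
- by rewrite logn1.
- move=> u v [u_gt0 le_uB] [v_gt0 le_vB]; rewrite lcmn_gt0 u_gt0 logn_lcm //.
  by split=> //; case: (leqP (logn p u) (logn p v)) => _.
- move=> x /andP[xr _]; have /andP[Fx_gt0 le_FxB] := F_bnd x xr; split=> //.
  exact: leq_trans (dvdn_leq Fx_gt0 (pfactor_dvdnn p _)) le_FxB.
Qed.

Section RealHelpers.
Local Open Scope R_scope.

Lemma INR_leq m n : (m <= n)%N -> INR m <= INR n.
Proof. by move/leP; apply: le_INR. Qed.

Lemma INR_expn m k : INR (m ^ k) = INR m ^ k.
Proof. by elim: k => // k IHk; rewrite expnS mulnE mult_INR IHk. Qed.

Lemma ln_INR_le m n : (0 < m)%N -> (m <= n)%N -> ln (INR m) <= ln (INR n).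
Proof.
move=> m_gt0 le_mn; have [lt_mn|->] := Rle_lt_or_eq_dec _ _ (INR_leq le_mn).
  by apply/Rlt_le/ln_increasing => //; apply/lt_0_INR/ltP.
exact: Rle_refl.
Qed.

Lemma ln_INR_ge0 m : (0 < m)%N -> 0 <= ln (INR m).
Proof. by move=> m_gt0; rewrite -ln_1 -[1]/(INR 1); apply: ln_INR_le. Qed.

Lemma sum_ln_INR (s : seq nat) (w : nat -> nat) : (forall p, 0 < w p)%N ->
  foldr Rplus 0 (map (fun p => ln (INR (w p))) s) = ln (INR (\prod_(p <- s) w p)).
Proof.
move=> w_gt0; elim: s => [|p s IHs] /=; first by rewrite big_nil ln_1.
rewrite big_cons mulnE mult_INR ln_mult ?IHs //; apply: lt_0_INR; apply/ltP.
  exact: w_gt0.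
exact: prodn_gt0.
Qed.

Lemma prod_trunc_le U m (G : nat -> nat) : (forall p, 0 < G p)%N ->
  (forall p, m < p -> G p = 1)%N ->
  (\prod_(p <- iota 0 U) G p <= \prod_(0 <= p < m.+1) G p)%N.
Proof.
move=> G_gt0 G_eq1; rewrite -{1}(subn0 U) -/(index_iota 0 U).
have [le_Um|lt_mU] := leqP U m.+1.
  by rewrite [leqRHS](big_cat_nat _ (n := U)) //= leq_pmulr ?prodn_gt0.
have tail1 : (\prod_(m.+1 <= p < U) G p = 1)%N.
  by rewrite big1_seq // => p /andP[_]; rewrite mem_index_iota => /andP[lt_mp _]; apply: G_eq1.
rewrite (big_cat_nat _ (n := m.+1)) //=; last exact: ltnW.
by rewrite tail1 muln1.
Qed.

Lemma INR_le_sqrt m K : (m * m <= K)%N -> INR m <= sqrt (INR K).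
Proof.
move=> le_mmK; rewrite -(sqrt_square (INR m)); last exact: pos_INR.
by apply: sqrt_le_1_alt; rewrite -mult_INR; apply: INR_leq.
Qed.

Lemma sqrt_INR_le p K : INR p <= sqrt (INR K) -> (p * p <= K)%N.
Proof.
move=> le_p_sqrt; have le_sq : INR p * INR p <= INR K.
  rewrite -(sqrt_sqrt (INR K)); last exact: pos_INR.
  by apply: Rmult_le_compat => //; exact: pos_INR.
by rewrite -mult_INR in le_sq; apply/leP/INR_le.
Qed.

End RealHelpers.

Section Estimate.

Variables (N : nat) (a b d : nat -> nat).
Hypothesis hb : forall j, j < N -> 0 < b j.

(* K_n = sum_j (a_j n + b_j) bounds every factor a_j x + b_j with x <= n. *)
Definition factor_bound (n : nat) : nat := \sum_(0 <= j < N) (a j * n + b j).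
Definition fdegree : nat := \sum_(0 <= j < N) d j.

Lemma fpoly_gt0 x : 0 < fpoly N a b d x.
Proof.
rewrite /fpoly big_nat_cond; apply: prodn_cond_gt0 => j /andP[/andP[_ ltjN] _].
by rewrite expn_gt0 addn_gt0 hb ?orbT.
Qed.

Lemma fpoly_le n x : x <= n -> fpoly N a b d x <= factor_bound n ^ fdegree.
Proof.
move=> le_xn; rewrite /fpoly /fdegree expn_sum big_nat_cond [leqRHS]big_nat_cond.
apply: leq_prod => j /andP[/andP[_ ltjN] _]; apply: leq_exp_base.
rewrite /factor_bound (bigD1_seq j) ?mem_index_iota ?iota_uniq //=.
by apply: leq_trans (leq_addr _ _); rewrite leq_add2r leq_mul2l le_xn orbT.
Qed.

Lemma pfactor_Lf_le p n : p ^ logn p (Lf N a b d n) <= factor_bound n ^ fdegree.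
Proof.
apply: pfactor_biglcm_le => [|x]; first by apply: leq_trans (fpoly_le (leq0n n)); exact: fpoly_gt0.
by rewrite mem_index_iota fpoly_gt0 => /andP[_ le_xn]; apply: fpoly_le.
Qed.

Local Open Scope R_scope.

Lemma Mn_le n : Mn N a b n <= sqrt (INR (factor_bound n)).
Proof.
have term_le j : j \in iota 0 N -> (a j * n + b j <= factor_bound n)%N.
  rewrite mem_iota => /andP[_ ltjN].
  rewrite /factor_bound (bigD1_seq j) ?mem_index_iota ?iota_uniq //=.
  exact: leq_addr.
rewrite /Mn; elim: (iota 0 N) term_le => [|j s IHs] term_le /=; first exact: sqrt_pos.
apply: Rmax_lub; first by apply/sqrt_le_1_alt/INR_leq/term_le/mem_head.
by apply: IHs => i si; apply: term_le; rewrite in_cons si orbT.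
Qed.

(* The integer whose logarithm is the p-th term of the sum defining Ssum. *)
Definition weight (n p : nat) : nat :=
  if prime p then
    if Rle_dec (INR p) (Mn N a b n) then (p ^ logn p (Lf N a b d n))%N else 1%N
  else 1%N.

Lemma weight_gt0 n p : (0 < weight n p)%N.
Proof.
rewrite /weight; case: ifP => [pp|//]; case: Rle_dec => [le_pM|//].
by rewrite expn_gt0 prime_gt0.
Qed.

Lemma Ssum_ln n :
  Ssum N a b d n = ln (INR (\prod_(p <- iota 0 (Z.to_nat (up (Mn N a b n)))) weight n p)).
Proof.
rewrite -sum_ln_INR; last exact: weight_gt0.
rewrite /Ssum; congr foldr; apply: eq_map => p; rewrite /weight.
case: ifP => pp; last by rewrite ln_1.
case: Rle_dec => [le_pM|nle_pM]; last by rewrite ln_1.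
by rewrite INR_expn ln_pow //; apply/lt_0_INR/ltP/prime_gt0.
Qed.

Definition small_weight (n p : nat) : nat :=
  if prime p && (p <= Nat.sqrt (factor_bound n))%N
  then (p ^ logn p (Lf N a b d n))%N else 1%N.

(* A prime p <= M_n satisfies p <= isqrt K_n, so weights only live there. *)
Lemma weight_le_small n p : (weight n p <= small_weight n p)%N.
Proof.
have /andP[_ sq_gt] := sqrt_bounds (factor_bound n).
rewrite /weight /small_weight; case: ifP => //= pp.
case: Rle_dec => [le_pM|nle_pM] /=; last by case: ifP; rewrite ?expn_gt0 ?(prime_gt0 pp).
have le_ppK := sqrt_INR_le (Rle_trans _ _ _ le_pM (Mn_le n)).
suff -> : (p <= Nat.sqrt (factor_bound n))%N by [].
by rewrite leqNgt; apply/negP => lt_mp; nia.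
Qed.

Lemma weight_prod_le n :
  (\prod_(p <- iota 0 (Z.to_nat (up (Mn N a b n)))) weight n p
     <= 8 ^ (8 * fdegree * Nat.sqrt (factor_bound n)))%N.
Proof.
have /andP[_ sq_gt] := sqrt_bounds (factor_bound n).
set m := Nat.sqrt (factor_bound n) in sq_gt *.
apply: leq_trans (leq_prod (fun p _ => weight_le_small n p)) _.
apply: leq_trans (@prod_trunc_le _ m (small_weight n) _ _) _ => [p|p lt_mp|].
- by rewrite /small_weight; case: ifP => [/andP[pp _]|//]; rewrite expn_gt0 prime_gt0.
- by rewrite /small_weight -/m leqNgt lt_mp andbF.
have -> : (\prod_(0 <= p < m.+1) small_weight n p
           = \prod_(0 <= p < m.+1 | prime p) p ^ logn p (Lf N a b d n))%N.
  rewrite [RHS]big_mkcond; apply: eq_big_nat => p /andP[_ lt_pm].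
  by rewrite /small_weight -/m -ltnS lt_pm andbT.
rewrite (_ : 8 * fdegree * m = 4 * (2 * fdegree) * m)%N; last lia.
apply: prod_prime_powers_le => p pp le_pm; apply: leq_trans (pfactor_Lf_le p n) _.
by rewrite expnM; apply: leq_exp_base; rewrite expnS expn1 ltnW.
Qed.

Lemma Ssum_bound n :
  0 <= Ssum N a b d n <= INR (8 * fdegree * Nat.sqrt (factor_bound n)) * ln (INR 8).
Proof.
rewrite Ssum_ln; set P := (\prod_(p <- _) weight n p)%N.
have P_gt0 : (0 < P)%N by apply: prodn_gt0 => p; apply: weight_gt0.
split; first exact: ln_INR_ge0.
apply: Rle_trans (ln_INR_le P_gt0 (weight_prod_le n)) _.
by rewrite INR_expn ln_pow; [apply: Rle_refl | apply/lt_0_INR/ltP].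
Qed.

(* The constant sum_j (a_j + b_j), with K_n <= coef_sum * n for n >= 1. *)
Definition coef_sum : nat := \sum_(0 <= j < N) (a j + b j).

Lemma sqrt_factor_bound_le n : (0 < n)%N ->
  INR (Nat.sqrt (factor_bound n)) <= sqrt (INR coef_sum) * sqrt (INR n).
Proof.
move=> n_gt0; have /andP[sq_le _] := sqrt_bounds (factor_bound n).
rewrite -sqrt_mult_alt; last exact: pos_INR.
rewrite -mult_INR multE; apply: INR_le_sqrt.
apply: leq_trans sq_le _; rewrite /factor_bound /coef_sum big_distrl /=.
by apply: leq_sum => j _; nia.
Qed.

End Estimate.

Theorem mainTheorem5 (N : nat) (a b d : nat -> nat)
  (hN : (1 <= N)%N)
  (ha : forall j, (j < N)%N -> (0 < a j)%N)
  (hb : forall j, (j < N)%N -> (0 < b j)%N)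
  (hd : forall j, (j < N)%N -> (0 < d j)%N) :
  exists C : R, exists n0 : nat, forall n : nat, (n0 <= n)%N ->
    Rle (Rabs (Ssum N a b d n)) (Rmult C (sqrt (INR n))).
Proof.
exists (Rmult (Rmult (INR (8 * fdegree N d)) (ln (INR 8))) (sqrt (INR (coef_sum N a b)))), 1%N.
move=> n n_gt0.
have [Ssum_ge0 Ssum_le] := @Ssum_bound N a b d hb n.
have sqrt_le := sqrt_factor_bound_le N a b n_gt0.
have c_ge0 := Rmult_le_pos _ _ (pos_INR (8 * fdegree N d)) (@ln_INR_ge0 8 isT).
rewrite Rabs_right; last exact: Rle_ge.
apply: Rle_trans Ssum_le _; rewrite mult_INR; nra.
Qed.
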